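(* Let $\bar x:[0,\infty)\to(0,1]$ be the solution of $\bar x'(t)=-\bar x^2(t)-(1-\bar x^2(t))\bar x(t)$, $\bar x(0)=1$, and consider the system $$\bar s_2'=\bar x^2+(1-\bar x^2)\bar s_2^2,\qquad \bar s_3'=3\bar x^2+3(1-\bar x^2)\bar s_2\bar s_3,\qquad \bar s_4'=7\bar x^2+(1-\bar x^2)\bigl(4\bar s_2\bar s_4+3\bar s_3^2\bigr),$$ with $\bar s_2(0)=\bar s_3(0)=\bar s_4(0)=1$. Let $t_c\in(0,\infty)$ be the explosion time of $\bar s_2$, i.e. $\bar s_2$ is defined on $[0,t_c)$ and $\bar s_2(t)\to+\infty$ as $t\uparrow t_c$. Then $\bar s_2,\bar s_3,\bar s_4$ are uniquely defined on $[0,t_c)$, and as $t\uparrow t_c$ there exist positive constants $\alpha,\beta$ such that $$\bar s_2(t)\sim\frac{\alpha}{t_c-t},\qquad \bar s_3(t)\sim\beta\,\bar s_2(t)^3\sim\frac{\beta\alpha^3}{(t_c-t)^3},\qquad \bar s_4(t)\sim 3\beta^2\bar s_2(t)^5\sim\frac{3\beta^2\alpha^5}{(t_c-t)^5}.$$ More precisely, $\bar s_k(t)=\gamma_k(t_c-t)^{-(2k-3)}\bigl(1+O(t_c-t)\bigr)$ for $k=2,3,4$, with $\gamma_2=\alpha$, $\gamma_3=\beta\alpha^3$, $\gamma_4=3\beta^2\alpha^5$. Here $\alpha=(1-\bar x^2(t_c))^{-1}$ and $\beta=g(t_c)$, where $g$ is defined as follows: let $f$ be the solution of $f'=-\bar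 x^2 f^2-(1-\bar x^2)$, $f(0)=1$ (so that $f=1/\bar s_2$ on $[0,t_c)$ and $f(t_c)=0$), and let $g$ be the solution of $g'=3\bar x^2 f^3-3\bar x^2 f g$, $g(0)=1$, i.e. $g(t)=e^{-G(t)}+3e^{-G(t)}\int_0^t e^{G(u)}\bar x^2(u)f^3(u)\,du$ with $G(t)=3\int_0^t\bar x^2(u)f(u)\,du$.
   Context: It is known (and used as part of the setting) that $\bar x$ exists and is positive for all $t\ge0$ and that $\bar s_2$ explodes at a finite time $t_c>0$. The notation $a(t)\sim b(t)$ means $a(t)/b(t)\to1$. *)

From Stdlib Require Import Reals.
From Coquelicot Require Import Coquelicot.
Open Scope R_scope.

Definition cont_within (D : R -> Prop) (f : R -> R) (t : R) : Prop :=
  filterlim f (within D (locally t)) (locally (f t)).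

Definition xbar_sol (x : R -> R) : Prop :=
  x 0 = 1 /\
  (forall t, 0 <= t -> cont_within (fun u => 0 <= u) x t) /\
  (forall t, 0 < t -> is_derive x t (- (x t)^2 - (1 - (x t)^2) * x t)).

Definition s_sol (x : R -> R) (T : R) (s2 s3 s4 : R -> R) : Prop :=
  s2 0 = 1 /\ s3 0 = 1 /\ s4 0 = 1 /\
  (forall t, 0 <= t < T ->
     cont_within (fun u => 0 <= u < T) s2 t /\
     cont_within (fun u => 0 <= u < T) s3 t /\
     cont_within (fun u => 0 <= u < T) s4 t) /\
  (forall t, 0 < t < T ->
     is_derive s2 t ((x t)^2 + (1 - (x t)^2) * (s2 t)^2) /\
     is_derive s3 t (3 * (x t)^2 + 3 * (1 - (x t)^2) * s2 t * s3 t) /\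
     is_derive s4 t (7 * (x t)^2 +
                     (1 - (x t)^2) * (4 * s2 t * s4 t + 3 * (s3 t)^2))).

Definition s2_sol (x : R -> R) (T : R) (s2 : R -> R) : Prop :=
  s2 0 = 1 /\
  (forall t, 0 <= t < T -> cont_within (fun u => 0 <= u < T) s2 t) /\
  (forall t, 0 < t < T ->
     is_derive s2 t ((x t)^2 + (1 - (x t)^2) * (s2 t)^2)).

Definition f_sol (x : R -> R) (T : R) (f : R -> R) : Prop :=
  f 0 = 1 /\
  (forall t, 0 <= t <= T -> cont_within (fun u => 0 <= u <= T) f t) /\
  (forall t, 0 < t < T ->
     is_derive f t (- (x t)^2 * (f t)^2 - (1 - (x t)^2))).

Definition g_sol (x f : R -> R) (T : R) (g : R -> R) : Prop :=
  g 0 = 1 /\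
  (forall t, 0 <= t <= T -> cont_within (fun u => 0 <= u <= T) g t) /\
  (forall t, 0 < t < T ->
     is_derive g t (3 * (x t)^2 * (f t)^3 - 3 * (x t)^2 * f t * g t)).

Definition asymp_O (h : R -> R) (gam tc : R) (p : nat) : Prop :=
  exists C delta, 0 < delta /\
    forall t, tc - delta < t < tc ->
      Rabs (h t * (tc - t)^p / gam - 1) <= C * (tc - t).

Definition equiv_left (a b : R -> R) (tc : R) : Prop :=
  filterlim (fun t => a t / b t) (at_left tc) (locally 1).

(* With f = 1/s2 the Riccati equation for s2 becomes f' = -x^2 f^2 - (1 - x^2),
   whose solution vanishes at tc with slope -(1 - x(tc)^2); hence
   s2 ~ alpha/(tc - t) with an O(tc - t) relative error.  The substitution
   s3 = g s2^3 turns the s3 equation into the regular linear equation for g,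
   so s3/s2^3 -> g(tc) = beta > 0 (g stays above exp(-3 tc)).  Finally the
   defect s4 f^5 - 3 g^2 satisfies a linear equation with an O(tc - t) source;
   a Lyapunov estimate for its quotient by tc - t shows that it is O(tc - t),
   i.e. s4/s2^5 -> 3 beta^2.  Uniqueness is Gronwall's lemma, the coefficients
   of the linearised system being bounded on [0, t] since s2 is nondecreasing. *)

From Stdlib Require Import Reals Lra Psatz.
From Coquelicot Require Import Coquelicot.
Open Scope R_scope.

Lemma ball_Rabs (x e y : R) : ball x e y <-> Rabs (y - x) < e.
Proof. unfold ball; simpl; unfold AbsRing_ball, abs, minus, plus, opp; simpl; tauto. Qed.

Section ContWithin.

Variable D : R -> Prop.

Lemma cont_within_sub (D' : R -> Prop) (h : R -> R) (c : R) :
  (forall u, D' u -> D u) -> cont_within D h c -> cont_within D' h c.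
Proof.
  intros HD Hc P HP. specialize (Hc P HP). unfold filtermap, within in *.
  eapply filter_imp; [|exact Hc]. simpl. intros y Hy Hy'. apply Hy, HD, Hy'.
Qed.

Lemma cont_within_of_continuous (h : R -> R) (c : R) :
  continuous h c -> cont_within D h c.
Proof. intros Hc P HP. apply filter_le_within. exact (Hc P HP). Qed.

Lemma cont_within_of_derive (h : R -> R) (c l : R) :
  is_derive h c l -> cont_within D h c.
Proof.
  intros H. apply cont_within_of_continuous.
  apply (ex_derive_continuous (K := R_AbsRing) (V := R_NormedModule)). exists l; exact H.
Qed.

Lemma cont_within_const (k c : R) : cont_within D (fun _ => k) c.
Proof. apply filterlim_const. Qed.

Lemma cont_within_id (c : R) : cont_within D (fun u => u) c.
Proof. intros P HP. apply filter_le_within. exact HP. Qed.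

Lemma cont_within_plus (h k : R -> R) (c : R) :
  cont_within D h c -> cont_within D k c -> cont_within D (fun u => h u + k u) c.
Proof.
  intros Hh Hk. eapply filterlim_comp_2; [exact Hh | exact Hk | apply (filterlim_plus (h c) (k c))].
Qed.

Lemma cont_within_mult (h k : R -> R) (c : R) :
  cont_within D h c -> cont_within D k c -> cont_within D (fun u => h u * k u) c.
Proof.
  intros Hh Hk. eapply filterlim_comp_2; [exact Hh | exact Hk | apply (filterlim_mult (h c) (k c))].
Qed.

Lemma cont_within_opp (h : R -> R) (c : R) :
  cont_within D h c -> cont_within D (fun u => - h u) c.
Proof. intros Hh. eapply filterlim_comp; [exact Hh | apply (filterlim_opp (h c))]. Qed.

Lemma cont_within_minus (h k : R -> R) (c : R) :
  cont_within D h c -> cont_within D k c -> cont_within D (fun u => h u - k u) c.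
Proof. intros. apply cont_within_plus; [|apply cont_within_opp]; auto. Qed.

Lemma cont_within_pow (h : R -> R) (c : R) (n : nat) :
  cont_within D h c -> cont_within D (fun u => h u ^ n) c.
Proof.
  intros Hh. induction n as [|n IH]; simpl.
  - apply cont_within_const.
  - apply cont_within_mult; auto.
Qed.

Lemma cont_within_comp (h phi : R -> R) (c : R) :
  cont_within D h c -> continuous phi (h c) -> cont_within D (fun u => phi (h u)) c.
Proof. intros Hh Hphi. eapply filterlim_comp; [exact Hh | exact Hphi]. Qed.

End ContWithin.

Lemma cont_within_Icc_of_Ico (a b c : R) (h : R -> R) : a <= c < b ->
  cont_within (fun u => a <= u < b) h c -> cont_within (fun u => a <= u <= b) h c.
Proof.
  intros Hc H P HP. destruct (H P HP) as [e He].
  assert (Hr : 0 < Rmin e (b - c)) by (apply Rmin_glb_lt; [apply cond_pos | lra]).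
  exists (mkposreal _ Hr). intros y Hy Hay.
  pose proof (proj1 (ball_Rabs _ _ _) Hy) as Hy'. simpl in Hy'.
  pose proof (Rmin_l e (b - c)). pose proof (Rmin_r e (b - c)).
  apply He; [apply ball_Rabs; lra |]. apply Rabs_def2 in Hy'. lra.
Qed.

(** Clamping [u] to [[a, b]] turns a function continuous on [[a, b]] into one
    continuous on all of [R], as required by [MVT_gen] and [RInt]. *)
Definition clamp (a b u : R) : R := Rmax a (Rmin b u).

Lemma clamp_in (a b u : R) : a <= b -> a <= clamp a b u <= b.
Proof. intros; unfold clamp, Rmax, Rmin; repeat destruct Rle_dec; lra. Qed.

Lemma clamp_id (a b u : R) : a <= u <= b -> clamp a b u = u.
Proof. intros; unfold clamp, Rmax, Rmin; repeat destruct Rle_dec; lra. Qed.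

Lemma clamp_lt (a b u : R) : a < b -> u < b -> clamp a b u < b.
Proof. intros; unfold clamp, Rmax, Rmin; repeat destruct Rle_dec; lra. Qed.

Lemma clamp_1_lipschitz (a b u v : R) : a <= b ->
  Rabs (clamp a b u - clamp a b v) <= Rabs (u - v).
Proof. intros; unfold clamp, Rmax, Rmin; repeat destruct Rle_dec; split_Rabs; lra. Qed.

Lemma continuous_clamp_comp (a b s : R) (h : R -> R) : a <= b ->
  cont_within (fun u => a <= u <= b) h (clamp a b s) ->
  continuous (fun u => h (clamp a b u)) s.
Proof.
  intros Hab Hc. eapply filterlim_comp; [|exact Hc].
  intros P [e He]. exists e. intros y Hy. apply He.
  - apply ball_Rabs. apply ball_Rabs in Hy.
    eapply Rle_lt_trans; [apply clamp_1_lipschitz|]; auto.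
  - apply clamp_in; auto.
Qed.

(** In the eta-expanded form produced by [auto_derive]. *)
Lemma Derive_of_is_derive (h : R -> R) (t d : R) :
  is_derive h t d -> Derive (fun y : R => h y) t = d.
Proof. apply is_derive_unique. Qed.

Ltac rewrite_Derive_hyps :=
  repeat match goal with
  | |- context [Derive (fun y : R => ?h y) ?t] =>
      match goal with H : is_derive h t ?d |- _ => rewrite (Derive_of_is_derive h t d H) end
  end.

(** [auto_derive], with the unknown derivatives supplied by [is_derive] hypotheses. *)
Ltac auto_derive_hyps :=
  auto_derive;
  [ repeat split;
    try match goal with H : is_derive ?h ?t ?d |- ex_derive ?h ?t => exists d; exact H end
  | rewrite_Derive_hyps ].

Lemma le_of_derive_nonpos (a b : R) (h dh : R -> R) : a <= b ->
  (forall c, a <= c <= b -> cont_within (fun u => a <= u <= b) h c) ->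
  (forall s, a < s < b -> is_derive h s (dh s)) ->
  (forall s, a < s < b -> dh s <= 0) -> h b <= h a.
Proof.
  intros Hab Hc Hd Hn.
  destruct (MVT_gen (fun u => h (clamp a b u)) a b (fun s => Rmin (dh s) 0)) as [c [Hc1 Hc2]].
  - intros s Hs. rewrite Rmin_left, Rmax_right in Hs by lra.
    rewrite Rmin_left by (apply Hn; lra).
    apply is_derive_ext_loc with h; [| apply Hd; lra].
    assert (He : 0 < Rmin (s - a) (b - s)) by (apply Rmin_glb_lt; lra).
    exists (mkposreal _ He). intros y Hy.
    pose proof (proj1 (ball_Rabs _ _ _) Hy) as Hy'. simpl in Hy'. apply Rabs_def2 in Hy'.
    pose proof (Rmin_l (s - a) (b - s)). pose proof (Rmin_r (s - a) (b - s)).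
    rewrite clamp_id; lra.
  - intros s _. apply continuity_pt_filterlim, continuous_clamp_comp; [lra |].
    apply Hc, clamp_in; lra.
  - rewrite !clamp_id in Hc2 by lra. pose proof (Rmin_r (dh c) 0). nra.
Qed.

Lemma Rabs_sub_le_of_derive_bound (a b K : R) (h dh : R -> R) : a <= b ->
  (forall c, a <= c <= b -> cont_within (fun u => a <= u <= b) h c) ->
  (forall s, a < s < b -> is_derive h s (dh s)) ->
  (forall s, a < s < b -> Rabs (dh s) <= K) ->
  Rabs (h b - h a) <= K * (b - a).
Proof.
  intros Hab Hc Hd HK.
  assert (Hup : h b - K * b <= h a - K * a).
  { apply (le_of_derive_nonpos a b (fun s => h s - K * s) (fun s => dh s - K)); auto.
    - intros c Hc'. apply cont_within_minus; auto.
      apply cont_within_mult; [apply cont_within_const | apply cont_within_id].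
    - intros s Hs. pose proof (Hd s Hs). auto_derive_hyps. ring.
    - intros s Hs. specialize (HK s Hs). split_Rabs; lra. }
  assert (Hlow : - h b - K * b <= - h a - K * a).
  { apply (le_of_derive_nonpos a b (fun s => - h s - K * s) (fun s => - dh s - K)); auto.
    - intros c Hc'. apply cont_within_minus; [apply cont_within_opp; auto |].
      apply cont_within_mult; [apply cont_within_const | apply cont_within_id].
    - intros s Hs. pose proof (Hd s Hs). auto_derive_hyps. ring.
    - intros s Hs. specialize (HK s Hs). split_Rabs; lra. }
  split_Rabs; lra.
Qed.

(** Gronwall: [q^2 exp(-2 M s)] is nonincreasing. *)
Lemma gronwall_zero (q c : R -> R) (M t : R) : 0 < t ->
  (forall u, 0 <= u <= t -> cont_within (fun v => 0 <= v <= t) q u) -> q 0 = 0 ->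
  (forall s, 0 < s < t -> is_derive q s (c s * q s)) ->
  (forall s, 0 < s < t -> Rabs (c s) <= M) -> q t = 0.
Proof.
  intros Ht Hc H0 Hd HM.
  assert (HE : q t * q t * exp (- (2 * M) * t) <= q 0 * q 0 * exp (- (2 * M) * 0)).
  { apply (le_of_derive_nonpos 0 t (fun s => q s * q s * exp (- (2 * M) * s))
      (fun s => 2 * (q s * q s) * (c s - M) * exp (- (2 * M) * s))); [lra | | |].
    - intros u Hu. apply cont_within_mult; [apply cont_within_mult; auto |].
      apply cont_within_comp; [|apply continuous_exp].
      apply cont_within_mult; [apply cont_within_const | apply cont_within_id].
    - intros s Hs. pose proof (Hd s Hs). auto_derive_hyps. ring.
    - intros s Hs. specialize (HM s Hs). pose proof (exp_pos (- (2 * M) * s)).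
      pose proof (Rle_abs (c s)). pose proof (Rle_0_sqr (q s)). unfold Rsqr in *.
      assert (0 <= q s * q s * exp (- (2 * M) * s)) by (apply Rmult_le_pos; lra). nra. }
  rewrite H0, !Rmult_0_l in HE. pose proof (exp_pos (- (2 * M) * t)).
  assert (q t * q t <= 0) by nra. nra.
Qed.

Lemma eq_of_derive_diff (T : R) (a b c da db : R -> R) :
  (forall t, 0 <= t < T -> cont_within (fun u => 0 <= u < T) a t) ->
  (forall t, 0 <= t < T -> cont_within (fun u => 0 <= u < T) b t) ->
  a 0 = b 0 ->
  (forall s, 0 < s < T -> is_derive a s (da s)) ->
  (forall s, 0 < s < T -> is_derive b s (db s)) ->
  (forall s, 0 < s < T -> da s - db s = c s * (a s - b s)) ->
  (forall t, 0 < t < T -> exists M, forall s, 0 < s < t -> Rabs (c s) <= M) ->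
  forall t, 0 <= t < T -> a t = b t.
Proof.
  intros Ha Hb H0 Hda Hdb Hc HM t Ht.
  destruct (Req_dec t 0) as [-> | Ht0]; [exact H0 |].
  destruct (HM t ltac:(lra)) as [M HMt].
  enough (a t - b t = 0) by lra.
  apply (gronwall_zero (fun s => a s - b s) c M t); [lra | | lra | | exact HMt].
  - intros u Hu. apply cont_within_minus;
      apply cont_within_sub with (fun v => 0 <= v < T); try (intros; lra); [apply Ha | apply Hb]; lra.
  - intros s Hs. pose proof (Hda s ltac:(lra)). pose proof (Hdb s ltac:(lra)).
    auto_derive_hyps. rewrite <- Hc by lra. ring.
Qed.

Lemma exp_le_mono (a b : R) : a <= b -> exp a <= exp b.
Proof. intros [Hlt | ->]; [left; apply exp_increasing; auto | lra]. Qed.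

Lemma ex_RInt_of_continuous_below (T t : R) (A : R -> R) : 0 < T -> t < T ->
  (forall s, s < T -> continuous A s) -> ex_RInt A 0 t.
Proof.
  intros HT Ht HA. apply (ex_RInt_continuous (V := R_CompleteNormedModule)).
  intros z Hz. apply HA. pose proof (Rmax_lub_lt 0 t T HT Ht). lra.
Qed.

Lemma is_derive_RInt_below (T t : R) (A : R -> R) : 0 < T -> t < T ->
  (forall s, s < T -> continuous A s) -> is_derive (fun u => RInt A 0 u) t (A t).
Proof.
  intros HT Ht HA. apply (is_derive_RInt A (fun u => RInt A 0 u) 0 t); [| apply HA; lra].
  assert (He : 0 < T - t) by lra. exists (mkposreal _ He). intros b Hb.
  pose proof (proj1 (ball_Rabs _ _ _) Hb) as Hb'. simpl in Hb'. apply Rabs_def2 in Hb'.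
  apply (RInt_correct (V := R_CompleteNormedModule)).
  apply ex_RInt_of_continuous_below with T; auto; lra.
Qed.

Section LinearODE.

Variables (A B : R -> R) (T : R).
Hypothesis T_pos : 0 < T.
Hypothesis A_cont : forall s, s < T -> continuous A s.
Hypothesis B_cont : forall s, s < T -> continuous B s.

(** Variation of constants for [y' = A y + B], [y 0 = y0]. *)
Definition lin_sol (y0 t : R) : R :=
  exp (RInt A 0 t) * (y0 + RInt (fun s => exp (- RInt A 0 s) * B s) 0 t).

Lemma lin_sol_0 (y0 : R) : lin_sol y0 0 = y0.
Proof.
  unfold lin_sol. rewrite !(RInt_point (V := R_CompleteNormedModule)).
  change (exp 0 * (y0 + 0) = y0). rewrite exp_0. ring.
Qed.

Lemma continuous_lin_sol_integrand (s : R) : s < T ->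
  continuous (fun u => exp (- RInt A 0 u) * B u) s.
Proof.
  intros Hs. apply (continuous_mult (K := R_AbsRing)); [| apply B_cont; auto].
  apply continuous_exp_comp, (continuous_opp (K := R_AbsRing) (fun u => RInt A 0 u)).
  apply (ex_derive_continuous (K := R_AbsRing) (V := R_NormedModule)).
  exists (A s). apply is_derive_RInt_below with T; auto.
Qed.

Lemma is_derive_lin_sol (y0 t : R) : t < T ->
  is_derive (lin_sol y0) t (A t * lin_sol y0 t + B t).
Proof.
  intros Ht.
  assert (Hcomb : forall P Q : R -> R, is_derive P t (A t) ->
            is_derive Q t (exp (- P t) * B t) ->
            is_derive (fun u => exp (P u) * (y0 + Q u)) t
              (A t * (exp (P t) * (y0 + Q t)) + B t)).
  { intros P Q HP HQ. auto_derive_hyps.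
    assert (E : exp (P t) * exp (- P t) = 1) by (rewrite <- exp_plus, Rplus_opp_r; apply exp_0).
    transitivity (A t * (exp (P t) * (y0 + Q t)) + exp (P t) * exp (- P t) * B t);
      [ring | rewrite E; ring]. }
  apply Hcomb.
  - apply is_derive_RInt_below with T; auto.
  - apply (is_derive_RInt_below T t _ T_pos Ht continuous_lin_sol_integrand).
Qed.

Lemma lin_sol_unique (y0 t : R) (y : R -> R) : 0 <= t < T ->
  (forall u, 0 <= u <= t -> cont_within (fun v => 0 <= v <= t) y u) -> y 0 = y0 ->
  (forall s, 0 < s < t -> is_derive y s (A s * y s + B s)) -> y t = lin_sol y0 t.
Proof.
  intros Ht Hc H0 Hd.
  destruct (Req_dec t 0) as [-> | Ht0]; [rewrite lin_sol_0; auto |].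
  destruct (continuity_ab_maj A 0 t) as [m1 [Hm1 _]];
    [lra | intros c Hc'; apply continuity_pt_filterlim, A_cont; lra |].
  destruct (continuity_ab_min A 0 t) as [m2 [Hm2 _]];
    [lra | intros c Hc'; apply continuity_pt_filterlim, A_cont; lra |].
  enough (y t - lin_sol y0 t = 0) by lra.
  apply (gronwall_zero (fun s => y s - lin_sol y0 s) A (Rmax (A m1) (- A m2)) t); [lra | | | |].
  - intros u Hu. apply cont_within_minus; auto.
    apply cont_within_of_derive with (A u * lin_sol y0 u + B u). apply is_derive_lin_sol; lra.
  - rewrite H0, lin_sol_0. ring.
  - intros s Hs. pose proof (Hd s Hs). pose proof (is_derive_lin_sol y0 s ltac:(lra)).
    auto_derive_hyps. ring.
  - intros s Hs. specialize (Hm1 s ltac:(lra)). specialize (Hm2 s ltac:(lra)).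
    pose proof (Rmax_l (A m1) (- A m2)). pose proof (Rmax_r (A m1) (- A m2)).
    split_Rabs; lra.
Qed.

Lemma lin_sol_lower (y0 M t : R) : 0 <= t < T -> 0 <= y0 ->
  (forall s, 0 < s < t -> 0 <= B s) -> (forall s, 0 < s < t -> - M <= A s) ->
  y0 * exp (- M * t) <= lin_sol y0 t.
Proof.
  intros Ht Hy0 HB HA.
  assert (HIA : - M * t <= RInt A 0 t).
  { replace (- M * t) with (RInt (fun _ => - M) 0 t).
    - apply RInt_le; [lra | apply ex_RInt_const | |auto].
      apply ex_RInt_of_continuous_below with T; auto; lra.
    - rewrite (RInt_const (V := R_CompleteNormedModule)). simpl. unfold scal; simpl.
      unfold mult; simpl. ring. }
  assert (HIB : 0 <= RInt (fun s => exp (- RInt A 0 s) * B s) 0 t).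
  { apply RInt_ge_0; [lra | |].
    - apply ex_RInt_of_continuous_below with T; [auto | lra |].
      exact continuous_lin_sol_integrand.
    - intros s Hs. apply Rmult_le_pos; [left; apply exp_pos | apply HB; auto]. }
  unfold lin_sol. pose proof (exp_le_mono _ _ HIA). pose proof (exp_pos (- M * t)). nra.
Qed.

End LinearODE.

Lemma Rabs_le_of_sqr_le (v M : R) : 1 <= M -> v ^ 2 + 1 <= M -> Rabs v <= M.
Proof.
  intros H1 H2. rewrite <- (pow2_abs v) in H2. pose proof (Rabs_pos v).
  destruct (Rle_dec (Rabs v) M) as [Hle | Hgt]; [exact Hle | nra].
Qed.

(** The Lyapunov function [(V^2 + 1) exp (-(2 B + K) s)] is nonincreasing. *)
Lemma bounded_of_linear_ode (V b sigma : R -> R) (t0 T B K : R) : t0 < T ->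
  (forall s, t0 <= s < T -> is_derive V s (b s * V s + sigma s)) ->
  (forall s, t0 <= s < T -> Rabs (b s) <= B) ->
  (forall s, t0 <= s < T -> Rabs (sigma s) <= K) ->
  exists M, forall t, t0 <= t < T -> Rabs (V t) <= M.
Proof.
  intros HT Hd Hb Hs.
  assert (HB : 0 <= B) by (pose proof (Hb t0 ltac:(lra)); pose proof (Rabs_pos (b t0)); lra).
  assert (HK : 0 <= K) by (pose proof (Hs t0 ltac:(lra)); pose proof (Rabs_pos (sigma t0)); lra).
  set (L := 2 * B + K).
  set (W := fun s => (V s ^ 2 + 1) * exp (- L * s)).
  exists ((V t0 ^ 2 + 1) * exp (L * (T - t0))). intros t Ht.
  assert (HW : W t <= W t0).
  { apply (le_of_derive_nonpos t0 t W
      (fun s => (2 * V s * (b s * V s + sigma s) - L * (V s ^ 2 + 1)) * exp (- L * s))); [lra | | |].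
    - intros c Hc. pose proof (Hd c ltac:(lra)). unfold W.
      apply cont_within_of_derive
        with ((2 * V c * (b c * V c + sigma c) - L * (V c ^ 2 + 1)) * exp (- L * c)).
      auto_derive_hyps. ring.
    - intros s Hs'. pose proof (Hd s ltac:(lra)). unfold W. auto_derive_hyps. ring.
    - intros s Hs'. specialize (Hb s ltac:(lra)). specialize (Hs s ltac:(lra)).
      pose proof (exp_pos (- L * s)).
      assert (b s * V s ^ 2 <= B * V s ^ 2)
        by (pose proof (Rle_abs (b s)); pose proof (pow2_ge_0 (V s)); nra).
      assert (V s * sigma s <= Rabs (V s) * K).
      { eapply Rle_trans; [apply Rle_abs |]. rewrite Rabs_mult.
        apply Rmult_le_compat_l; [apply Rabs_pos | auto]. }
      assert (2 * Rabs (V s) <= V s ^ 2 + 1).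
      { rewrite <- (pow2_abs (V s)). pose proof (pow2_ge_0 (Rabs (V s) - 1)). simpl in *. nra. }
      assert (2 * V s * (b s * V s + sigma s) - L * (V s ^ 2 + 1) <= 0) by (unfold L; simpl in *; nra).
      nra. }
  unfold W in HW.
  assert (HL : 0 <= L) by (unfold L; lra).
  assert (Hexp : exp (- L * t0) * exp (L * t) <= exp (L * (T - t0)))
    by (rewrite <- exp_plus; apply exp_le_mono; nra).
  assert (Hexp1 : 1 <= exp (L * (T - t0))) by (rewrite <- exp_0; apply exp_le_mono; nra).
  assert (E : exp (- L * t) * exp (L * t) = 1) by (rewrite <- exp_plus, <- exp_0; f_equal; ring).
  pose proof (pow2_ge_0 (V t0)). pose proof (exp_pos (L * t)).
  apply Rabs_le_of_sqr_le; [nra |].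
  assert (Hm : (V t ^ 2 + 1) * exp (- L * t) * exp (L * t)
               <= (V t0 ^ 2 + 1) * exp (- L * t0) * exp (L * t)) by (apply Rmult_le_compat_r; lra).
  rewrite Rmult_assoc, E, Rmult_1_r, Rmult_assoc in Hm. nra.
Qed.

Definition is_lim_left_O (h : R -> R) (tc c : R) : Prop :=
  exists C delta, 0 < delta /\
    forall t, tc - delta < t < tc -> Rabs (h t - c) <= C * (tc - t).

Lemma le_half_of_le_div (C a e : R) : 0 <= C -> 0 < a -> 0 <= e <= a / (2 * C + 1) ->
  C * e <= a / 2.
Proof.
  intros HC Ha He. apply Rle_trans with (C * (a / (2 * C + 1))); [apply Rmult_le_compat_l; lra |].
  apply Rmult_le_reg_r with (2 * C + 1); [lra |].
  unfold Rdiv. rewrite Rmult_assoc, Rmult_assoc, Rinv_l by lra. nra.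
Qed.

Section LimLeftO.

Variable tc : R.

Lemma is_lim_left_O_nonneg (h : R -> R) (c : R) : is_lim_left_O h tc c ->
  exists C delta, 0 <= C /\ 0 < delta /\
    forall t, tc - delta < t < tc -> Rabs (h t - c) <= C * (tc - t).
Proof.
  intros [C [d [Hd H]]]. exists (Rabs C), d. split; [apply Rabs_pos | split; auto].
  intros t Ht. eapply Rle_trans; [apply H; auto |].
  apply Rmult_le_compat_r; [lra | apply Rle_abs].
Qed.

Lemma is_lim_left_O_ext (h k : R -> R) (c : R) : 0 < tc ->
  (forall t, 0 < t < tc -> h t = k t) -> is_lim_left_O h tc c -> is_lim_left_O k tc c.
Proof.
  intros Htc Hhk [C [d [Hd H]]]. exists C, (Rmin d tc). split; [apply Rmin_glb_lt; auto |].
  intros t Ht. pose proof (Rmin_l d tc). pose proof (Rmin_r d tc).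
  rewrite <- Hhk by lra. apply H; lra.
Qed.

Lemma is_lim_left_O_const (c : R) : is_lim_left_O (fun _ => c) tc c.
Proof.
  exists 0, 1. split; [lra |]. intros t Ht.
  rewrite Rminus_diag, Rabs_R0. lra.
Qed.

Lemma is_lim_left_O_plus (h k : R -> R) (a b : R) :
  is_lim_left_O h tc a -> is_lim_left_O k tc b -> is_lim_left_O (fun t => h t + k t) tc (a + b).
Proof.
  intros [C1 [d1 [Hd1 H1]]] [C2 [d2 [Hd2 H2]]].
  exists (C1 + C2), (Rmin d1 d2). split; [apply Rmin_glb_lt; auto |].
  intros t Ht. pose proof (Rmin_l d1 d2). pose proof (Rmin_r d1 d2).
  specialize (H1 t ltac:(lra)). specialize (H2 t ltac:(lra)).
  replace (h t + k t - (a + b)) with ((h t - a) + (k t - b)) by ring.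
  eapply Rle_trans; [apply Rabs_triang | lra].
Qed.

Lemma is_lim_left_O_mult (h k : R -> R) (a b : R) :
  is_lim_left_O h tc a -> is_lim_left_O k tc b -> is_lim_left_O (fun t => h t * k t) tc (a * b).
Proof.
  intros Hh Hk.
  destruct (is_lim_left_O_nonneg h a Hh) as [C1 [d1 [HC1 [Hd1 H1]]]].
  destruct (is_lim_left_O_nonneg k b Hk) as [C2 [d2 [HC2 [Hd2 H2]]]].
  exists (C1 * (Rabs b + C2 * d2) + Rabs a * C2), (Rmin d1 d2).
  split; [apply Rmin_glb_lt; auto |].
  intros t Ht. pose proof (Rmin_l d1 d2). pose proof (Rmin_r d1 d2).
  specialize (H1 t ltac:(lra)). specialize (H2 t ltac:(lra)).
  assert (Hkt : Rabs (k t) <= Rabs b + C2 * d2).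
  { replace (k t) with (b + (k t - b)) by ring.
    eapply Rle_trans; [apply Rabs_triang |]. nra. }
  replace (h t * k t - a * b) with ((h t - a) * k t + a * (k t - b)) by ring.
  eapply Rle_trans; [apply Rabs_triang |]. rewrite !Rabs_mult.
  pose proof (Rabs_pos (h t - a)). pose proof (Rabs_pos (k t)). pose proof (Rabs_pos a).
  assert (Rabs (h t - a) * Rabs (k t) <= C1 * (tc - t) * (Rabs b + C2 * d2))
    by (apply Rmult_le_compat; auto).
  assert (Rabs a * Rabs (k t - b) <= Rabs a * (C2 * (tc - t)))
    by (apply Rmult_le_compat_l; auto).
  nra.
Qed.

Lemma is_lim_left_O_scal (h : R -> R) (a k : R) :
  is_lim_left_O h tc a -> is_lim_left_O (fun t => h t * k) tc (a * k).
Proof. intros Hh. apply (is_lim_left_O_mult h (fun _ => k)); [exact Hh | apply is_lim_left_O_const]. Qed.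

Lemma is_lim_left_O_pow (h : R -> R) (a : R) (n : nat) :
  is_lim_left_O h tc a -> is_lim_left_O (fun t => h t ^ n) tc (a ^ n).
Proof.
  intros Hh. induction n as [| n IH]; simpl.
  - apply is_lim_left_O_const.
  - apply is_lim_left_O_mult; auto.
Qed.

Lemma is_lim_left_O_inv (h : R -> R) (a : R) : a <> 0 ->
  is_lim_left_O h tc a -> is_lim_left_O (fun t => / h t) tc (/ a).
Proof.
  intros Ha Hh. destruct (is_lim_left_O_nonneg h a Hh) as [C [d [HC [Hd H]]]].
  assert (Hra : 0 < Rabs a) by (apply Rabs_pos_lt; auto).
  assert (He : 0 < Rabs a / (2 * C + 1)) by (apply Rdiv_lt_0_compat; lra).
  exists (2 * C / (Rabs a * Rabs a)), (Rmin d (Rabs a / (2 * C + 1))).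
  split; [apply Rmin_glb_lt; auto |].
  intros t Ht. pose proof (Rmin_l d (Rabs a / (2 * C + 1))).
  pose proof (Rmin_r d (Rabs a / (2 * C + 1))).
  specialize (H t ltac:(lra)).
  pose proof (le_half_of_le_div C (Rabs a) (tc - t) HC Hra ltac:(lra)) as Hsmall.
  assert (Hht : Rabs a / 2 <= Rabs (h t)).
  { pose proof (Rabs_triang_inv a (a - h t)) as Htri.
    rewrite (Rabs_minus_sym a (h t)) in Htri.
    replace (a - (a - h t)) with (h t) in Htri by ring. lra. }
  assert (Hh0 : h t <> 0) by (intro E; rewrite E, Rabs_R0 in Hht; lra).
  replace (/ h t - / a) with ((a - h t) / (h t * a)) by (field; auto).
  rewrite Rabs_div, Rabs_mult, (Rabs_minus_sym a) by (apply Rmult_integral_contrapositive; auto).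
  apply Rle_trans with (C * (tc - t) / (Rabs a / 2 * Rabs a)).
  - unfold Rdiv. apply Rmult_le_compat; [apply Rabs_pos | left; apply Rinv_0_lt_compat; nra | auto |].
    apply Rinv_le_contravar; [nra |]. apply Rmult_le_compat_r; lra.
  - right. field. lra.
Qed.

Lemma is_lim_left_O_lower (h : R -> R) (a : R) : 0 < a -> is_lim_left_O h tc a ->
  exists delta, 0 < delta /\ forall t, tc - delta < t < tc -> a / 2 <= h t.
Proof.
  intros Ha Hh. destruct (is_lim_left_O_nonneg h a Hh) as [C [d [HC [Hd H]]]].
  assert (He : 0 < a / (2 * C + 1)) by (apply Rdiv_lt_0_compat; lra).
  exists (Rmin d (a / (2 * C + 1))). split; [apply Rmin_glb_lt; auto |].
  intros t Ht. pose proof (Rmin_l d (a / (2 * C + 1))). pose proof (Rmin_r d (a / (2 * C + 1))).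
  specialize (H t ltac:(lra)).
  pose proof (le_half_of_le_div C a (tc - t) HC Ha ltac:(lra)).
  revert H. split_Rabs; lra.
Qed.

Lemma filterlim_of_is_lim_left_O (h : R -> R) (a : R) :
  is_lim_left_O h tc a -> filterlim h (at_left tc) (locally a).
Proof.
  intros Hh P [eps He]. destruct (is_lim_left_O_nonneg h a Hh) as [C [d [HC [Hd H]]]].
  assert (Hr : 0 < Rmin d (eps / (C + 1))).
  { apply Rmin_glb_lt; auto. apply Rdiv_lt_0_compat; [apply cond_pos | lra]. }
  exists (mkposreal _ Hr). intros t Ht Htlt. apply He, ball_Rabs.
  pose proof (proj1 (ball_Rabs _ _ _) Ht) as Ht'. simpl in Ht'.
  rewrite Rabs_left in Ht' by lra.
  pose proof (Rmin_l d (eps / (C + 1))). pose proof (Rmin_r d (eps / (C + 1))).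
  specialize (H t ltac:(lra)).
  assert (C * (tc - t) < eps).
  { apply Rle_lt_trans with ((C + 1) * (tc - t)); [nra |].
    apply Rlt_le_trans with ((C + 1) * (eps / (C + 1))); [apply Rmult_lt_compat_l; lra |].
    right. field. lra. }
  lra.
Qed.

End LimLeftO.

Lemma asymptotics_of_ratio (h s : R -> R) (tc alpha c : R) (n : nat) :
  0 < tc -> alpha <> 0 -> c <> 0 -> (forall t, 0 < t < tc -> s t <> 0) ->
  is_lim_left_O (fun t => s t * (tc - t)) tc alpha ->
  is_lim_left_O (fun t => h t / s t ^ n) tc c ->
  equiv_left h (fun t => c * s t ^ n) tc /\
  equiv_left h (fun t => c * alpha ^ n / (tc - t) ^ n) tc /\
  asymp_O h (c * alpha ^ n) tc n.
Proof.
  intros Htc Hal Hc Hs Hlin Hratio.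
  assert (Hcan : c * alpha ^ n <> 0)
    by (apply Rmult_integral_contrapositive; split; auto; apply pow_nonzero; auto).
  assert (Hscaled : is_lim_left_O (fun t => h t * (tc - t) ^ n / (c * alpha ^ n)) tc 1).
  { rewrite <- (Rinv_r _ Hcan).
    apply is_lim_left_O_ext
      with (fun t => h t / s t ^ n * (s t * (tc - t)) ^ n * / (c * alpha ^ n)); auto.
    - intros t Ht. rewrite Rpow_mult_distr. field. repeat split; try apply pow_nonzero; auto.
    - apply is_lim_left_O_scal, is_lim_left_O_mult; [exact Hratio |].
      apply is_lim_left_O_pow; exact Hlin. }
  split; [| split; [| exact Hscaled]]; apply filterlim_of_is_lim_left_O.
  - rewrite <- (Rinv_r _ Hc).
    apply is_lim_left_O_ext with (fun t => h t / s t ^ n * / c); auto.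
    + intros t Ht. field. repeat split; try apply pow_nonzero; auto.
    + apply is_lim_left_O_scal; exact Hratio.
  - apply is_lim_left_O_ext with (fun t => h t * (tc - t) ^ n / (c * alpha ^ n)); auto.
    intros t Ht. field. repeat split; try apply pow_nonzero; auto; lra.
Qed.

Section MomentSystem.

Variable x : R -> R.
Hypothesis x_range : forall t, 0 <= t -> 0 < x t <= 1.

Lemma one_minus_x_sq_range (t : R) : 0 <= t -> 0 <= 1 - x t ^ 2 <= 1.
Proof. intros Ht. specialize (x_range t Ht). simpl. nra. Qed.

Lemma s2_sol_of_s_sol (T : R) (s2 s3 s4 : R -> R) : s_sol x T s2 s3 s4 -> s2_sol x T s2.
Proof.
  intros [H2 [_ [_ [Hc Hd]]]]. split; [exact H2 | split].
  - intros t Ht. apply Hc; auto.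
  - intros t Ht. apply Hd; auto.
Qed.

Lemma s2_sol_nondecreasing (T : R) (s2 : R -> R) : s2_sol x T s2 ->
  forall a b, 0 <= a <= b -> b < T -> s2 a <= s2 b.
Proof.
  intros [_ [Hc Hd]] a b Hab HbT.
  enough (- s2 b <= - s2 a) by lra.
  apply (le_of_derive_nonpos a b (fun u => - s2 u)
    (fun u => - ((x u) ^ 2 + (1 - (x u) ^ 2) * (s2 u) ^ 2))); [lra | | |].
  - intros c Hc'. apply cont_within_opp.
    apply cont_within_sub with (fun u => 0 <= u < T); [intros; lra | apply Hc; lra].
  - intros u Hu. pose proof (Hd u ltac:(lra)). auto_derive_hyps. ring.
  - intros u Hu. pose proof (one_minus_x_sq_range u ltac:(lra)).
    pose proof (pow2_ge_0 (x u)). pose proof (pow2_ge_0 (s2 u)).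
    assert (0 <= (1 - x u ^ 2) * s2 u ^ 2) by (apply Rmult_le_pos; lra). lra.
Qed.

Lemma s2_sol_ge_1 (T : R) (s2 : R -> R) : s2_sol x T s2 -> forall t, 0 <= t < T -> 1 <= s2 t.
Proof.
  intros Hs t Ht. rewrite <- (proj1 Hs). apply (s2_sol_nondecreasing T s2 Hs); lra.
Qed.

Lemma s2_sol_coeff_bound (T k t : R) (s2 : R -> R) : 0 <= k -> s2_sol x T s2 -> t < T ->
  forall s, 0 < s < t -> Rabs (k * (1 - x s ^ 2) * s2 s) <= k * s2 t.
Proof.
  intros Hk Hs Ht s Hst. pose proof (one_minus_x_sq_range s ltac:(lra)).
  pose proof (s2_sol_ge_1 T s2 Hs s ltac:(lra)).
  pose proof (s2_sol_nondecreasing T s2 Hs s t ltac:(lra) Ht).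
  rewrite Rabs_pos_eq by (apply Rmult_le_pos; [apply Rmult_le_pos |]; lra).
  rewrite Rmult_assoc. apply Rmult_le_compat_l; [lra | nra].
Qed.

Lemma s_sol_unique (T : R) (a2 a3 a4 b2 b3 b4 : R -> R) :
  s_sol x T a2 a3 a4 -> s_sol x T b2 b3 b4 ->
  forall t, 0 <= t < T -> a2 t = b2 t /\ a3 t = b3 t /\ a4 t = b4 t.
Proof.
  intros Ha Hb.
  pose proof (s2_sol_of_s_sol T a2 a3 a4 Ha) as Ha2.
  pose proof (s2_sol_of_s_sol T b2 b3 b4 Hb) as Hb2.
  destruct Ha as [A2 [A3 [A4 [Ac Ad]]]]. destruct Hb as [B2 [B3 [B4 [Bc Bd]]]].
  assert (E2 : forall t, 0 <= t < T -> a2 t = b2 t).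
  { apply (eq_of_derive_diff T a2 b2 (fun s => (1 - x s ^ 2) * (a2 s + b2 s))
      (fun s => (x s) ^ 2 + (1 - (x s) ^ 2) * (a2 s) ^ 2)
      (fun s => (x s) ^ 2 + (1 - (x s) ^ 2) * (b2 s) ^ 2));
      try (intros; apply Ac || apply Bc || apply Ad || apply Bd; auto);
      [congruence | intros; ring |].
    intros t Ht. exists (a2 t + b2 t). intros s Hs.
    pose proof (s2_sol_coeff_bound T 1 t a2 ltac:(lra) Ha2 ltac:(lra) s Hs).
    pose proof (s2_sol_coeff_bound T 1 t b2 ltac:(lra) Hb2 ltac:(lra) s Hs).
    replace ((1 - x s ^ 2) * (a2 s + b2 s))
      with (1 * (1 - x s ^ 2) * a2 s + 1 * (1 - x s ^ 2) * b2 s) by ring.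
    eapply Rle_trans; [apply Rabs_triang | lra]. }
  assert (E3 : forall t, 0 <= t < T -> a3 t = b3 t).
  { apply (eq_of_derive_diff T a3 b3 (fun s => 3 * (1 - x s ^ 2) * a2 s)
      (fun s => 3 * (x s) ^ 2 + 3 * (1 - (x s) ^ 2) * a2 s * a3 s)
      (fun s => 3 * (x s) ^ 2 + 3 * (1 - (x s) ^ 2) * b2 s * b3 s));
      try (intros; apply Ac || apply Bc || apply Ad || apply Bd; auto);
      [congruence | intros s Hs; rewrite (E2 s) by lra; ring |].
    intros t Ht. exists (3 * a2 t). apply (s2_sol_coeff_bound T); auto; lra. }
  assert (E4 : forall t, 0 <= t < T -> a4 t = b4 t).
  { apply (eq_of_derive_diff T a4 b4 (fun s => 4 * (1 - x s ^ 2) * a2 s)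
      (fun s => 7 * (x s) ^ 2 + (1 - (x s) ^ 2) * (4 * a2 s * a4 s + 3 * (a3 s) ^ 2))
      (fun s => 7 * (x s) ^ 2 + (1 - (x s) ^ 2) * (4 * b2 s * b4 s + 3 * (b3 s) ^ 2)));
      try (intros; apply Ac || apply Bc || apply Ad || apply Bd; auto);
      [congruence | intros s Hs; rewrite (E2 s), (E3 s) by lra; ring |].
    intros t Ht. exists (4 * a2 t). apply (s2_sol_coeff_bound T); auto; lra. }
  intros t Ht. auto.
Qed.

End MomentSystem.

Section Explosion.

Variables (x : R -> R) (tc : R) (s2 f g : R -> R).
Hypothesis x_solves : xbar_sol x.
Hypothesis x_range : forall t, 0 <= t -> 0 < x t <= 1.
Hypothesis tc_pos : 0 < tc.
Hypothesis s2_solves : s2_sol x tc s2.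
Hypothesis s2_explodes : filterlim s2 (at_left tc) (Rbar_locally p_infty).
Hypothesis f_solves : f_sol x tc f.
Hypothesis g_solves : g_sol x f tc g.

Local Notation kc := (1 - x tc ^ 2).
Local Notation beta := (g tc).

Lemma x_cont (a b c : R) : 0 <= a -> a <= c <= b -> cont_within (fun u => a <= u <= b) x c.
Proof.
  intros Ha Hc. apply cont_within_sub with (fun u => 0 <= u); [intros; lra |].
  apply (proj1 (proj2 x_solves)). lra.
Qed.

Lemma f_cont (a b c : R) : 0 <= a -> b <= tc -> a <= c <= b ->
  cont_within (fun u => a <= u <= b) f c.
Proof.
  intros Ha Hb Hc. apply cont_within_sub with (fun u => 0 <= u <= tc); [intros; lra |].
  apply (proj1 (proj2 f_solves)). lra.
Qed.

Lemma g_cont (a b c : R) : 0 <= a -> b <= tc -> a <= c <= b ->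
  cont_within (fun u => a <= u <= b) g c.
Proof.
  intros Ha Hb Hc. apply cont_within_sub with (fun u => 0 <= u <= tc); [intros; lra |].
  apply (proj1 (proj2 g_solves)). lra.
Qed.

(** [x e^t] is nonincreasing. *)
Lemma x_tc_lt_1 : x tc < 1.
Proof.
  destruct x_solves as [X0 [_ Xd]].
  assert (H : x tc * exp tc <= x 0 * exp 0).
  { apply (le_of_derive_nonpos 0 tc (fun s => x s * exp s)
      (fun s => exp s * (x s) ^ 2 * (x s - 1))); [lra | | |].
    - intros c Hc. apply cont_within_mult; [apply x_cont; lra |].
      apply cont_within_comp; [apply cont_within_id | apply continuous_exp].
    - intros s Hs. pose proof (Xd s ltac:(lra)). auto_derive_hyps. ring.
    - intros s Hs. specialize (x_range s ltac:(lra)). pose proof (exp_pos s).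
      assert (0 <= exp s * x s ^ 2) by (simpl; nra). nra. }
  rewrite X0, exp_0 in H. assert (1 < exp tc) by (rewrite <- exp_0; apply exp_increasing; lra).
  specialize (x_range tc ltac:(lra)). nra.
Qed.

Lemma kc_range : 0 < kc <= 1.
Proof. pose proof x_tc_lt_1. specialize (x_range tc ltac:(lra)). simpl. nra. Qed.

Lemma x_sq_lipschitz (t : R) : 0 < t <= tc -> Rabs (x t ^ 2 - x tc ^ 2) <= 4 * (tc - t).
Proof.
  intros Ht. destruct x_solves as [_ [_ Xd]].
  assert (H : Rabs (x tc - x t) <= 2 * (tc - t)).
  { apply (Rabs_sub_le_of_derive_bound t tc 2 x (fun s => - (x s) ^ 2 - (1 - (x s) ^ 2) * x s));
      [lra | intros; apply x_cont; lra | intros; apply Xd; lra |].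
    intros s Hs. specialize (x_range s ltac:(lra)). simpl. rewrite Rabs_left1 by nra. nra. }
  pose proof (x_range t ltac:(lra)). pose proof (x_range tc ltac:(lra)).
  replace (x t ^ 2 - x tc ^ 2) with ((x tc - x t) * (- (x tc + x t))) by ring.
  rewrite Rabs_mult, Rabs_Ropp, (Rabs_pos_eq (x tc + x t)) by lra.
  apply Rle_trans with (2 * (tc - t) * 2); [apply Rmult_le_compat | ]; try lra. apply Rabs_pos.
Qed.

Lemma f_nonincreasing (a b : R) : 0 <= a <= b -> b <= tc -> f b <= f a.
Proof.
  intros Hab Hb. destruct f_solves as [_ [_ Fd]].
  apply (le_of_derive_nonpos a b f (fun s => - (x s) ^ 2 * (f s) ^ 2 - (1 - (x s) ^ 2)));
    [lra | intros; apply f_cont; lra | intros; apply Fd; lra |].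
  intros s Hs. pose proof (one_minus_x_sq_range x x_range s ltac:(lra)).
  pose proof (pow2_ge_0 (x s)). pose proof (pow2_ge_0 (f s)).
  assert (0 <= x s ^ 2 * f s ^ 2) by (apply Rmult_le_pos; lra). lra.
Qed.

Lemma f_le_1 (t : R) : 0 <= t <= tc -> f t <= 1.
Proof. intros Ht. rewrite <- (proj1 f_solves). apply f_nonincreasing; lra. Qed.

(** [f s2 - 1] solves a linear equation with zero initial value. *)
Lemma f_mul_s2 (t : R) : 0 <= t < tc -> f t * s2 t = 1.
Proof.
  destruct f_solves as [F0 [Fc Fd]]. destruct s2_solves as [S0 [Sc Sd]].
  apply (eq_of_derive_diff tc (fun s => f s * s2 s) (fun _ => 1)
    (fun s => (1 - x s ^ 2) * s2 s - x s ^ 2 * f s)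
    (fun s => (- (x s) ^ 2 * (f s) ^ 2 - (1 - (x s) ^ 2)) * s2 s
              + f s * ((x s) ^ 2 + (1 - (x s) ^ 2) * (s2 s) ^ 2))
    (fun _ => 0)).
  - intros u Hu. apply cont_within_mult; [| apply Sc; auto].
    apply cont_within_sub with (fun u => 0 <= u <= tc); [intros; lra | apply Fc; lra].
  - intros; apply cont_within_const.
  - rewrite F0, S0. ring.
  - intros s Hs. pose proof (Fd s Hs). pose proof (Sd s Hs). auto_derive_hyps. ring.
  - intros s Hs. auto_derive; auto.
  - intros s Hs. ring.
  - intros r Hr. exists (s2 r + (1 + Rabs (f tc))). intros s Hs.
    pose proof (s2_sol_coeff_bound x x_range tc 1 r s2 ltac:(lra) s2_solves ltac:(lra) s Hs) as Hc1.
    rewrite !Rmult_1_l in Hc1.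
    pose proof (f_le_1 s ltac:(lra)). pose proof (f_nonincreasing s tc ltac:(lra) ltac:(lra)).
    pose proof (x_range s ltac:(lra)).
    assert (Rabs (x s ^ 2 * f s) <= 1 + Rabs (f tc)).
    { rewrite Rabs_mult, (Rabs_pos_eq (x s ^ 2)) by (apply pow2_ge_0).
      assert (Rabs (f s) <= 1 + Rabs (f tc)) by (split_Rabs; lra).
      assert (0 <= x s ^ 2 <= 1) by (simpl; nra). pose proof (Rabs_pos (f s)). nra. }
    eapply Rle_trans; [apply Rabs_triang |]. rewrite Rabs_Ropp. lra.
Qed.

Lemma f_pos (t : R) : 0 <= t < tc -> 0 < f t.
Proof.
  intros Ht. pose proof (f_mul_s2 t Ht). pose proof (s2_sol_ge_1 x x_range tc s2 s2_solves t Ht). nra.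
Qed.

Lemma s2_eq_inv_f (t : R) : 0 <= t < tc -> s2 t = / f t.
Proof. intros Ht. pose proof (f_mul_s2 t Ht). pose proof (f_pos t Ht). field_simplify_eq; lra. Qed.

Lemma f_tc : f tc = 0.
Proof.
  apply (filterlim_locally_unique (F := at_left tc) f).
  - intros P HP. destruct (proj1 (proj2 f_solves) tc ltac:(lra) P HP) as [e He].
    assert (Hr : 0 < Rmin e tc) by (apply Rmin_glb_lt; [apply cond_pos | lra]).
    exists (mkposreal _ Hr). intros y Hy Hyt.
    pose proof (proj1 (ball_Rabs _ _ _) Hy) as Hy'. simpl in Hy'. apply Rabs_def2 in Hy'.
    pose proof (Rmin_l e tc). pose proof (Rmin_r e tc).
    apply He; [apply ball_Rabs; rewrite Rabs_left; lra | lra].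
  - apply filterlim_ext_loc with (fun t => / s2 t).
    + exists (mkposreal _ tc_pos). intros y Hy Hyt. simpl in Hy.
      pose proof (proj1 (ball_Rabs _ _ _) Hy) as Hy'. simpl in Hy'. apply Rabs_def2 in Hy'.
      pose proof (f_pos y ltac:(lra)). rewrite s2_eq_inv_f by lra. apply Rinv_inv.
    + eapply filterlim_comp; [exact s2_explodes |].
      apply (filterlim_Rbar_inv p_infty). discriminate.
Qed.

Lemma f_le_dist (t : R) : 0 <= t <= tc -> 0 <= f t <= tc - t.
Proof.
  intros Ht. pose proof (f_nonincreasing t tc ltac:(lra) ltac:(lra)) as Hftc. rewrite f_tc in Hftc.
  assert (Hlip : Rabs (f tc - f t) <= 1 * (tc - t)).
  { apply (Rabs_sub_le_of_derive_bound t tc 1 f (fun s => - (x s) ^ 2 * (f s) ^ 2 - (1 - (x s) ^ 2)));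
      [lra | intros; apply f_cont; lra | intros; apply (proj2 (proj2 f_solves)); lra |].
    intros s Hs. pose proof (one_minus_x_sq_range x x_range s ltac:(lra)).
    pose proof (x_range s ltac:(lra)). pose proof (f_le_1 s ltac:(lra)).
    pose proof (f_nonincreasing s tc ltac:(lra) ltac:(lra)). rewrite f_tc in *.
    assert (0 <= (f s) ^ 2 <= 1) by (simpl; nra).
    rewrite Rabs_left1 by nra. nra. }
  rewrite f_tc in Hlip. split; [lra |]. revert Hlip. split_Rabs; lra.
Qed.

(** [g] solves [g' = A g + B] with [A >= -3] and [B >= 0]. *)
Lemma g_ge_exp (t : R) : 0 <= t <= tc -> exp (- 3 * tc) <= g t.
Proof.
  intros Ht. destruct g_solves as [G0 [_ Gd]].
  set (A := fun u => -3 * x (clamp 0 tc u) ^ 2 * f (clamp 0 tc u)).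
  set (B := fun u => 3 * x (clamp 0 tc u) ^ 2 * f (clamp 0 tc u) ^ 3).
  assert (HA : forall s, s < tc + 1 -> continuous A s).
  { intros s _. apply (continuous_clamp_comp 0 tc s (fun v => -3 * x v ^ 2 * f v)); [lra |].
    pose proof (clamp_in 0 tc s ltac:(lra)).
    apply cont_within_mult; [apply cont_within_mult; [apply cont_within_const |] |].
    - apply cont_within_pow, x_cont; lra.
    - apply f_cont; lra. }
  assert (HB : forall s, s < tc + 1 -> continuous B s).
  { intros s _. apply (continuous_clamp_comp 0 tc s (fun v => 3 * x v ^ 2 * f v ^ 3)); [lra |].
    pose proof (clamp_in 0 tc s ltac:(lra)).
    apply cont_within_mult; [apply cont_within_mult; [apply cont_within_const |] |].
    - apply cont_within_pow, x_cont; lra.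
    - apply cont_within_pow, f_cont; lra. }
  rewrite (lin_sol_unique A B (tc + 1) ltac:(lra) HA HB 1 t g); try lra.
  - apply Rle_trans with (1 * exp (- 3 * t)).
    + rewrite Rmult_1_l. apply exp_le_mono. lra.
    + apply (lin_sol_lower A B (tc + 1) ltac:(lra) HA HB); try lra.
      * intros s Hs. unfold B. rewrite clamp_id by lra.
        pose proof (x_range s ltac:(lra)). pose proof (f_le_dist s ltac:(lra)).
        assert (0 <= f s ^ 3) by (apply pow_le; lra). simpl in *. nra.
      * intros s Hs. unfold A. rewrite clamp_id by lra.
        pose proof (x_range s ltac:(lra)). pose proof (f_le_dist s ltac:(lra)).
        pose proof (f_le_1 s ltac:(lra)).
        assert (0 <= x s ^ 2 <= 1) by (simpl; nra). change (-3 <= -3 * x s ^ 2 * f s). nra.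
  - intros u Hu. apply g_cont; lra.
  - intros s Hs. unfold A, B. rewrite clamp_id by lra.
    replace (-3 * x s ^ 2 * f s * g s + 3 * x s ^ 2 * f s ^ 3)
      with (3 * x s ^ 2 * f s ^ 3 - 3 * x s ^ 2 * f s * g s) by ring.
    apply Gd. lra.
Qed.

Lemma g_pos (t : R) : 0 <= t <= tc -> 0 < g t.
Proof. intros Ht. eapply Rlt_le_trans; [apply exp_pos | apply g_ge_exp; auto]. Qed.

Lemma g_le (t : R) : 0 <= t <= tc -> g t <= 1 + 3 * tc.
Proof.
  intros Ht. destruct g_solves as [G0 [_ Gd]].
  enough (g t - 3 * t <= g 0 - 3 * 0) by lra.
  apply (le_of_derive_nonpos 0 t (fun s => g s - 3 * s)
    (fun s => (3 * x s ^ 2 * f s ^ 3 - 3 * x s ^ 2 * f s * g s) - 3)); [lra | | |].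
  - intros c Hc. apply cont_within_minus; [apply g_cont; lra |].
    apply cont_within_mult; [apply cont_within_const | apply cont_within_id].
  - intros s Hs. pose proof (Gd s ltac:(lra)). auto_derive_hyps. ring.
  - intros s Hs. pose proof (x_range s ltac:(lra)). pose proof (f_le_dist s ltac:(lra)).
    pose proof (f_le_1 s ltac:(lra)). pose proof (g_pos s ltac:(lra)).
    assert (0 <= x s ^ 2 <= 1) by (simpl; nra).
    assert (f s ^ 3 <= 1) by (simpl; nra).
    assert (0 <= x s ^ 2 * f s * g s) by (apply Rmult_le_pos; [apply Rmult_le_pos |]; lra).
    nra.
Qed.

(** [g'] vanishes at [tc] because it carries the factor [f]. *)
Lemma g_deriv_small (s : R) : 0 < s < tc ->
  Rabs (3 * x s ^ 2 * f s ^ 3 - 3 * x s ^ 2 * f s * g s) <= 3 * (2 + 3 * tc) * (tc - s).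
Proof.
  intros Hs. pose proof (x_range s ltac:(lra)). pose proof (f_le_dist s ltac:(lra)).
  pose proof (f_le_1 s ltac:(lra)). pose proof (g_pos s ltac:(lra)). pose proof (g_le s ltac:(lra)).
  assert (0 <= x s ^ 2 <= 1) by (simpl; nra).
  replace (3 * x s ^ 2 * f s ^ 3 - 3 * x s ^ 2 * f s * g s)
    with (3 * (x s ^ 2 * f s) * (f s * f s - g s)) by ring.
  rewrite Rabs_mult, Rabs_mult, (Rabs_pos_eq 3), (Rabs_pos_eq (x s ^ 2 * f s))
    by (try apply Rmult_le_pos; simpl; nra).
  assert (Rabs (f s * f s - g s) <= 2 + 3 * tc) by (split_Rabs; nra).
  assert (0 <= x s ^ 2 * f s <= tc - s) by (split; nra).
  assert (x s ^ 2 * f s * Rabs (f s * f s - g s) <= (tc - s) * (2 + 3 * tc))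
    by (apply Rmult_le_compat; try apply Rabs_pos; lra).
  nra.
Qed.

Lemma g_lim : is_lim_left_O g tc beta.
Proof.
  exists (3 * (2 + 3 * tc) * tc), tc. split; [lra |]. intros t Ht.
  rewrite Rabs_minus_sym.
  apply (Rabs_sub_le_of_derive_bound t tc _ g
    (fun s => 3 * x s ^ 2 * f s ^ 3 - 3 * x s ^ 2 * f s * g s));
    [lra | intros; apply g_cont; lra | intros; apply (proj2 (proj2 g_solves)); lra |].
  intros s Hs. eapply Rle_trans; [apply g_deriv_small; lra |].
  apply Rmult_le_compat_l; lra.
Qed.

Lemma f_quadratic (t : R) : 0 < t < tc ->
  Rabs (f t - kc * (tc - t)) <= (tc + 4) * ((tc - t) * (tc - t)).
Proof.
  intros Ht.
  assert (H : Rabs ((f tc - kc * (tc - tc)) - (f t - kc * (tc - t))) <= (tc + 4) * (tc - t) * (tc - t)).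
  { apply (Rabs_sub_le_of_derive_bound t tc _ (fun s => f s - kc * (tc - s))
      (fun s => - x s ^ 2 * f s ^ 2 - (1 - x s ^ 2) + kc)); [lra | | |].
    - intros c Hc. apply cont_within_minus; [apply f_cont; lra |].
      apply cont_within_mult; [apply cont_within_const |].
      apply cont_within_minus; [apply cont_within_const | apply cont_within_id].
    - intros s Hs. pose proof (proj2 (proj2 f_solves) s ltac:(lra)). auto_derive_hyps. ring.
    - intros s Hs. pose proof (x_range s ltac:(lra)). pose proof (f_le_dist s ltac:(lra)).
      pose proof (x_sq_lipschitz s ltac:(lra)).
      replace (- x s ^ 2 * f s ^ 2 - (1 - x s ^ 2) + kc)
        with (- (x s ^ 2 * f s ^ 2) + (x s ^ 2 - x tc ^ 2)) by ring.
      eapply Rle_trans; [apply Rabs_triang |].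
      rewrite Rabs_Ropp, Rabs_pos_eq by (apply Rmult_le_pos; apply pow2_ge_0).
      assert (0 <= x s ^ 2 <= 1) by (simpl; nra).
      assert (0 <= f s ^ 2 <= (tc - s) * (tc - s)) by (simpl; split; nra).
      assert (x s ^ 2 * f s ^ 2 <= (tc - s) * (tc - s)) by nra.
      assert ((tc - s) * (tc - s) <= tc * (tc - t)) by nra.
      nra. }
  rewrite f_tc in H. rewrite <- Rabs_Ropp.
  replace (- (f t - kc * (tc - t))) with (0 - kc * (tc - tc) - (f t - kc * (tc - t))) by ring.
  lra.
Qed.

Lemma f_over_dist_lim : is_lim_left_O (fun t => f t / (tc - t)) tc kc.
Proof.
  exists (tc + 4), tc. split; [lra |]. intros t Ht. pose proof (f_quadratic t ltac:(lra)).
  replace (f t / (tc - t) - kc) with ((f t - kc * (tc - t)) / (tc - t)) by (field; lra).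
  rewrite Rabs_div, (Rabs_pos_eq (tc - t)) by lra.
  apply Rle_trans with ((tc + 4) * ((tc - t) * (tc - t)) / (tc - t)).
  - apply Rmult_le_compat_r; [left; apply Rinv_0_lt_compat; lra | auto].
  - right. field. lra.
Qed.

Lemma s2_lim : is_lim_left_O (fun t => s2 t * (tc - t)) tc (/ kc).
Proof.
  pose proof kc_range.
  apply is_lim_left_O_ext with (fun t => / (f t / (tc - t))); auto.
  - intros t Ht. rewrite s2_eq_inv_f by lra. pose proof (f_pos t ltac:(lra)). field. lra.
  - apply is_lim_left_O_inv; [lra | apply f_over_dist_lim].
Qed.

(** The [s4] equation as [s4' = s4_rate s4 + s4_forcing] once [s3 = g s2^3]. *)
Definition s4_rate (u : R) : R :=
  4 * (1 - x (clamp 0 tc u) ^ 2) * s2 (clamp 0 tc u).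

Definition s4_forcing (u : R) : R :=
  7 * x (clamp 0 tc u) ^ 2
  + 3 * (1 - x (clamp 0 tc u) ^ 2) * (g (clamp 0 tc u) * s2 (clamp 0 tc u) ^ 3) ^ 2.

Lemma s2_cont_Icc (c : R) : 0 <= c < tc -> cont_within (fun u => 0 <= u <= tc) s2 c.
Proof. intros Hc. apply cont_within_Icc_of_Ico; [lra | apply (proj1 (proj2 s2_solves)); lra]. Qed.

Lemma continuous_s4_rate (s : R) : s < tc -> continuous s4_rate s.
Proof.
  intros Hs. apply (continuous_clamp_comp 0 tc s (fun v => 4 * (1 - x v ^ 2) * s2 v)); [lra |].
  pose proof (clamp_in 0 tc s ltac:(lra)). pose proof (clamp_lt 0 tc s tc_pos Hs).
  apply cont_within_mult; [apply cont_within_mult; [apply cont_within_const |] | apply s2_cont_Icc; lra].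
  apply cont_within_minus; [apply cont_within_const | apply cont_within_pow, x_cont; lra].
Qed.

Lemma continuous_s4_forcing (s : R) : s < tc -> continuous s4_forcing s.
Proof.
  intros Hs.
  apply (continuous_clamp_comp 0 tc s
    (fun v => 7 * x v ^ 2 + 3 * (1 - x v ^ 2) * (g v * s2 v ^ 3) ^ 2)); [lra |].
  pose proof (clamp_in 0 tc s ltac:(lra)). pose proof (clamp_lt 0 tc s tc_pos Hs).
  apply cont_within_plus.
  - apply cont_within_mult; [apply cont_within_const | apply cont_within_pow, x_cont; lra].
  - apply cont_within_mult; [apply cont_within_mult; [apply cont_within_const |] |].
    + apply cont_within_minus; [apply cont_within_const | apply cont_within_pow, x_cont; lra].
    + apply cont_within_pow, cont_within_mult; [apply g_cont; lra |].
      apply cont_within_pow, s2_cont_Icc; lra.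
Qed.

Lemma s_sol_explicit : s_sol x tc s2 (fun t => g t * s2 t ^ 3) (lin_sol s4_rate s4_forcing 1).
Proof.
  destruct s2_solves as [S0 [Sc Sd]]. destruct g_solves as [G0 [_ Gd]].
  pose proof (is_derive_lin_sol s4_rate s4_forcing tc tc_pos continuous_s4_rate continuous_s4_forcing 1)
    as D4.
  split; [exact S0 | split; [rewrite G0, S0; ring | split; [apply lin_sol_0 | split]]].
  - intros t Ht. split; [apply Sc; auto | split].
    + apply cont_within_mult; [| apply cont_within_pow, Sc; auto].
      apply cont_within_sub with (fun u => 0 <= u <= tc); [intros; lra | apply g_cont; lra].
    + apply cont_within_of_derive with (s4_rate t * lin_sol s4_rate s4_forcing 1 t + s4_forcing t).
      apply D4. lra.
  - intros t Ht. pose proof (Sd t Ht). pose proof (Gd t Ht).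
    split; [auto | split].
    + auto_derive_hyps. rewrite (s2_eq_inv_f t) by lra. pose proof (f_pos t ltac:(lra)).
      field. lra.
    + replace (7 * x t ^ 2 + (1 - x t ^ 2) * (4 * s2 t * lin_sol s4_rate s4_forcing 1 t
                                              + 3 * (g t * s2 t ^ 3) ^ 2))
        with (s4_rate t * lin_sol s4_rate s4_forcing 1 t + s4_forcing t)
        by (unfold s4_rate, s4_forcing; rewrite clamp_id by lra; ring).
      apply D4. lra.
Qed.

Lemma s3_eq (s3 s4 : R -> R) : s_sol x tc s2 s3 s4 ->
  forall t, 0 <= t < tc -> s3 t = g t * s2 t ^ 3.
Proof.
  intros Hs t Ht. apply (s_sol_unique x x_range tc _ _ _ _ _ _ Hs s_sol_explicit t Ht).
Qed.

Lemma s3_ratio_lim (s3 s4 : R -> R) : s_sol x tc s2 s3 s4 ->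
  is_lim_left_O (fun t => s3 t / s2 t ^ 3) tc beta.
Proof.
  intros Hs. apply is_lim_left_O_ext with g; auto; [| apply g_lim].
  intros t Ht. rewrite (s3_eq s3 s4 Hs t) by lra.
  pose proof (s2_sol_ge_1 x x_range tc s2 s2_solves t ltac:(lra)). field. lra.
Qed.

(** With [u = s4 f^5 - 3 g^2], [V = u / (tc - t)] solves
    [V' = defect_drift V + defect_source / (tc - t)].  Both coefficients stay
    bounded near [tc] (every term of the source carries a factor [f] or [g']),
    so [V] is bounded, i.e. [u = O(tc - t)]. *)
Definition defect_drift (s : R) : R :=
  / (tc - s) - (1 - x s ^ 2) / f s - 5 * x s ^ 2 * f s.

Definition defect_source (s : R) : R :=
  7 * x s ^ 2 * f s ^ 5 - 15 * x s ^ 2 * f s * g s ^ 2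
  - 6 * g s * (3 * x s ^ 2 * f s ^ 3 - 3 * x s ^ 2 * f s * g s).

Lemma defect_source_small :
  exists K, forall s, 0 < s < tc -> Rabs (defect_source s) <= K * (tc - s).
Proof.
  set (Gm := 1 + 3 * tc).
  exists (7 + 15 * Gm ^ 2 + 6 * Gm * (3 * (2 + 3 * tc))). intros s Hs.
  pose proof (x_range s ltac:(lra)). pose proof (f_le_dist s ltac:(lra)).
  pose proof (f_le_1 s ltac:(lra)). pose proof (g_pos s ltac:(lra)). pose proof (g_le s ltac:(lra)).
  pose proof (g_deriv_small s Hs).
  assert (Hx2 : 0 <= x s ^ 2 <= 1) by (simpl; nra).
  assert (Hxf : 0 <= x s ^ 2 * f s <= tc - s) by (split; nra).
  assert (Hf4 : 0 <= f s ^ 4 <= 1).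
  { split; [apply pow_le; lra | rewrite <- (pow1 4); apply pow_incr; lra]. }
  assert (T1 : Rabs (7 * x s ^ 2 * f s ^ 5) <= 7 * (tc - s)).
  { replace (7 * x s ^ 2 * f s ^ 5) with (7 * (x s ^ 2 * f s) * f s ^ 4) by ring.
    rewrite Rabs_pos_eq by (apply Rmult_le_pos; lra). nra. }
  assert (T2 : Rabs (15 * x s ^ 2 * f s * g s ^ 2) <= 15 * Gm ^ 2 * (tc - s)).
  { replace (15 * x s ^ 2 * f s * g s ^ 2) with (15 * (x s ^ 2 * f s) * g s ^ 2) by ring.
    assert (0 <= g s ^ 2 <= Gm ^ 2) by (unfold Gm; simpl; split; nra).
    rewrite Rabs_pos_eq by (apply Rmult_le_pos; lra). nra. }
  assert (T3 : Rabs (6 * g s * (3 * x s ^ 2 * f s ^ 3 - 3 * x s ^ 2 * f s * g s))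
               <= 6 * Gm * (3 * (2 + 3 * tc)) * (tc - s)).
  { rewrite Rabs_mult, Rabs_mult, (Rabs_pos_eq 6), (Rabs_pos_eq (g s)) by lra.
    pose proof (Rabs_pos (3 * x s ^ 2 * f s ^ 3 - 3 * x s ^ 2 * f s * g s)).
    unfold Gm in *. nra. }
  unfold defect_source. unfold Rminus at 1 2.
  eapply Rle_trans; [apply Rabs_triang |]. rewrite Rabs_Ropp.
  eapply Rle_trans; [apply Rplus_le_compat_r, Rabs_triang |]. rewrite Rabs_Ropp.
  lra.
Qed.

Lemma defect_drift_bounded :
  exists B delta, 0 < delta <= tc /\
    forall s, tc - delta < s < tc -> Rabs (defect_drift s) <= B.
Proof.
  pose proof kc_range.
  destruct (is_lim_left_O_nonneg _ _ _ f_over_dist_lim) as [C [d1 [HC [Hd1 Hq]]]].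
  destruct (is_lim_left_O_lower tc _ kc ltac:(lra) f_over_dist_lim) as [d2 [Hd2 Hqlow]].
  set (d := Rmin tc (Rmin d1 d2)).
  assert (Hd : 0 < d <= tc /\ d <= d1 /\ d <= d2).
  { unfold d. pose proof (Rmin_l tc (Rmin d1 d2)). pose proof (Rmin_r tc (Rmin d1 d2)).
    pose proof (Rmin_l d1 d2). pose proof (Rmin_r d1 d2).
    repeat split; try lra. repeat apply Rmin_glb_lt; lra. }
  exists (2 * (C + 4) / kc + 5), d. split; [lra |]. intros s Hs.
  specialize (Hq s ltac:(lra)). specialize (Hqlow s ltac:(lra)).
  pose proof (x_range s ltac:(lra)). pose proof (f_le_1 s ltac:(lra)).
  pose proof (f_pos s ltac:(lra)). pose proof (x_sq_lipschitz s ltac:(lra)).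
  set (q := f s / (tc - s)) in *.
  assert (Hfq : f s = q * (tc - s)) by (unfold q; field; lra).
  assert (Hnum : Rabs (q - (1 - x s ^ 2)) <= (C + 4) * (tc - s)).
  { replace (q - (1 - x s ^ 2)) with ((q - kc) + (x s ^ 2 - x tc ^ 2)) by ring.
    eapply Rle_trans; [apply Rabs_triang | lra]. }
  unfold defect_drift. unfold Rminus at 2.
  eapply Rle_trans; [apply Rabs_triang |].
  rewrite Rabs_Ropp, (Rabs_pos_eq (5 * x s ^ 2 * f s)) by (simpl; nra).
  replace (/ (tc - s) + - ((1 - x s ^ 2) / f s)) with ((q - (1 - x s ^ 2)) / q / (tc - s))
    by (rewrite Hfq; field; split; lra).
  assert (Hdiv : Rabs ((q - (1 - x s ^ 2)) / q / (tc - s)) <= 2 * (C + 4) / kc).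
  { rewrite !Rabs_div by lra. rewrite (Rabs_pos_eq q), (Rabs_pos_eq (tc - s)) by lra.
    apply Rle_trans with ((C + 4) * (tc - s) / (kc / 2) / (tc - s)).
    - unfold Rdiv. apply Rmult_le_compat_r; [left; apply Rinv_0_lt_compat; lra |].
      apply Rmult_le_compat; [apply Rabs_pos | left; apply Rinv_0_lt_compat; lra | auto |].
      apply Rinv_le_contravar; lra.
    - right. field. lra. }
  assert (5 * x s ^ 2 * f s <= 5) by (simpl; nra).
  lra.
Qed.

Lemma is_derive_defect (s3 s4 : R -> R) : s_sol x tc s2 s3 s4 ->
  forall s, 0 < s < tc ->
  is_derive (fun t => (s4 t * f t ^ 5 - 3 * g t ^ 2) / (tc - t)) s
    (defect_drift s * ((s4 s * f s ^ 5 - 3 * g s ^ 2) / (tc - s)) + defect_source s / (tc - s)).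
Proof.
  intros Hs s Hst. pose proof (s3_eq s3 s4 Hs s ltac:(lra)) as E3.
  destruct Hs as [_ [_ [_ [_ Hd]]]]. destruct (Hd s Hst) as [_ [_ D4]].
  pose proof (proj2 (proj2 f_solves) s Hst). pose proof (proj2 (proj2 g_solves) s Hst).
  pose proof (f_pos s ltac:(lra)).
  auto_derive_hyps; [lra |].
  rewrite E3, (s2_eq_inv_f s) by lra. unfold defect_drift, defect_source. field. lra.
Qed.

Lemma s4_ratio_lim (s3 s4 : R -> R) : s_sol x tc s2 s3 s4 ->
  is_lim_left_O (fun t => s4 t / s2 t ^ 5) tc (3 * beta ^ 2).
Proof.
  intros Hs.
  destruct defect_drift_bounded as [B [d [Hd HB]]].
  destruct defect_source_small as [K HK].
  destruct (bounded_of_linear_ode (fun t => (s4 t * f t ^ 5 - 3 * g t ^ 2) / (tc - t))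
    defect_drift (fun s => defect_source s / (tc - s)) (tc - d / 2) tc B K) as [M HM]; [lra | | | |].
  - intros s Hst. apply (is_derive_defect s3 s4 Hs). lra.
  - intros s Hst. apply HB. lra.
  - intros s Hst. specialize (HK s ltac:(lra)).
    rewrite Rabs_div, (Rabs_pos_eq (tc - s)) by lra.
    apply Rle_trans with (K * (tc - s) / (tc - s)); [| right; field; lra].
    apply Rmult_le_compat_r; [left; apply Rinv_0_lt_compat; lra | auto].
  - assert (Hu : is_lim_left_O (fun t => s4 t * f t ^ 5 - 3 * g t ^ 2) tc 0).
    { exists M, (d / 2). split; [lra |]. intros t Ht. specialize (HM t ltac:(lra)).
      rewrite Rminus_0_r.
      replace (s4 t * f t ^ 5 - 3 * g t ^ 2)
        with ((s4 t * f t ^ 5 - 3 * g t ^ 2) / (tc - t) * (tc - t)) by (field; lra).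
      rewrite Rabs_mult, (Rabs_pos_eq (tc - t)) by lra.
      apply Rmult_le_compat_r; [lra | auto]. }
    replace (3 * beta ^ 2) with (0 + beta ^ 2 * 3) by ring.
    apply is_lim_left_O_ext with (fun t => (s4 t * f t ^ 5 - 3 * g t ^ 2) + g t ^ 2 * 3); auto.
    + intros t Ht. rewrite (s2_eq_inv_f t) by lra. pose proof (f_pos t ltac:(lra)).
      field. lra.
    + apply is_lim_left_O_plus; [exact Hu |].
      apply is_lim_left_O_scal, is_lim_left_O_pow, g_lim.
Qed.

End Explosion.

Theorem theorem3p1 :
  forall (x : R -> R) (tc : R) (s2 f g : R -> R),
    xbar_sol x ->
    (forall t, 0 <= t -> 0 < x t <= 1) ->
    0 < tc ->
    s2_sol x tc s2 ->
    filterlim s2 (at_left tc) (Rbar_locally p_infty) ->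
    f_sol x tc f ->
    g_sol x f tc g ->
    let alpha := / (1 - (x tc)^2) in
    let beta := g tc in
    0 < alpha /\ 0 < beta /\
    (exists s3 s4 : R -> R, s_sol x tc s2 s3 s4) /\
    (forall a2 a3 a4 b2 b3 b4 : R -> R,
        s_sol x tc a2 a3 a4 -> s_sol x tc b2 b3 b4 ->
        forall t, 0 <= t < tc -> a2 t = b2 t /\ a3 t = b3 t /\ a4 t = b4 t) /\
    (forall s3 s4 : R -> R, s_sol x tc s2 s3 s4 ->
        equiv_left s2 (fun t => alpha / (tc - t)) tc /\
        equiv_left s3 (fun t => beta * (s2 t)^3) tc /\
        equiv_left s3 (fun t => beta * alpha^3 / (tc - t)^3) tc /\
        equiv_left s4 (fun t => 3 * beta^2 * (s2 t)^5) tc /\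
        equiv_left s4 (fun t => 3 * beta^2 * alpha^5 / (tc - t)^5) tc /\
        asymp_O s2 alpha tc 1 /\
        asymp_O s3 (beta * alpha^3) tc 3 /\
        asymp_O s4 (3 * beta^2 * alpha^5) tc 5).
Proof.
  intros x tc s2 f g Hx Hxr Htc Hs2 Hlim Hf Hg alpha beta.
  pose proof (kc_range x tc Hx Hxr Htc) as Hkc.
  assert (Halpha : 0 < alpha) by (apply Rinv_0_lt_compat; lra).
  assert (Hbeta : 0 < beta) by (apply (g_pos x tc s2 f g); auto; lra).
  assert (Hs2_nz : forall t, 0 < t < tc -> s2 t <> 0).
  { intros t Ht. pose proof (s2_sol_ge_1 x Hxr tc s2 Hs2 t ltac:(lra)). lra. }
  pose proof (s2_lim x tc s2 f Hx Hxr Htc Hs2 Hlim Hf) as L2.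
  split; [exact Halpha | split; [exact Hbeta | split; [| split]]].
  - eexists _, _. exact (s_sol_explicit x tc s2 f g Hx Hxr Htc Hs2 Hf Hg).
  - intros a2 a3 a4 b2 b3 b4. apply (s_sol_unique x Hxr tc).
  - intros s3 s4 Hs.
    destruct (asymptotics_of_ratio s3 s2 tc alpha beta 3 Htc ltac:(lra) ltac:(lra) Hs2_nz L2
      (s3_ratio_lim x tc s2 f g Hx Hxr Htc Hs2 Hlim Hf Hg s3 s4 Hs)) as [E3 [E3' O3]].
    destruct (asymptotics_of_ratio s4 s2 tc alpha (3 * beta ^ 2) 5 Htc ltac:(lra) ltac:(nra) Hs2_nz L2
      (s4_ratio_lim x tc s2 f g Hx Hxr Htc Hs2 Hlim Hf Hg s3 s4 Hs)) as [E4 [E4' O5]].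
    assert (O2 : asymp_O s2 alpha tc 1).
    { unfold asymp_O. rewrite <- (Rinv_r alpha) by lra.
      apply is_lim_left_O_ext with (fun t => s2 t * (tc - t) * / alpha); auto.
      - intros t Ht. simpl. field. lra.
      - apply is_lim_left_O_scal, L2. }
    repeat split; auto.
    apply filterlim_of_is_lim_left_O,
      is_lim_left_O_ext with (fun t => s2 t * (tc - t) ^ 1 / alpha); auto.
    intros t Ht. simpl. field. lra.
Qed.
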